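(* For every finite-dimensional complex representation $V$ of $S_n$, \[ \mathrm{ch}\,\mathrm{Ind}\,V=\mathcal F(V)[H], \] where $H=\sum_{\mathbf x\in\mathbf N^n}t^{\mathbf x}=\sum_{k\ge0}h_k(t_1,\dots,t_n)$.
   Context: $S_n$ is regarded as the subgroup of permutation matrices in $\mathrm{GL}_n(\mathbf C)$. $M_n$ is the space of $n\times n$ complex matrices and $P^d(M_n)$ the homogeneous polynomials of degree $d$ in the entries of $Q\in M_n$. For a representation $(\rho,V)$ of $S_n$, $\mathrm{Ind}^dV=\{f\in P^d(M_n)\otimes V: f(wQ)=\rho(w)f(Q)\ \forall w\in S_n,Q\in M_n\}$ (elements viewed as $V$-valued polynomial functions on $M_n$), a polynomial representation of $\mathrm{GL}_n(\mathbf C)$ via $(\mathrm{Ind}^d\rho(g)f)(Q)=f(Qg)$. The character of a polynomial representation $\sigma$ of $\mathrm{GL}_n(\mathbf C)$ is $\mathrm{ch}\,\sigma(t_1,\dots,t_n)=\mathrm{trace}\,\sigma(\mathrm{diag}(t_1,\dots,t_n))$, and $\mathrm{ch}\,\mathrm{Ind}\,V:=\sum_{d\ge0}\mathrm{ch}\,\mathrm{Ind}^dV$, a symmetric formal power series in $t_1,\dots,t_n$. $\mathcal F(V)$ is the Frobenius characteristic of the character of $V$ (so $\mathcal F(V_\mu)=s_\mu$ for Specht modules). For $\mathbf x\in\mathbf N^n$, $t^{\mathbf x}=t_1^{x_1}\dotsb t_n^{x_n}$. Plethysm: if $g$ is a (possibly infinite) sum of monic monomials $t^{\mathbf x_1}+t^{\mathbf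 x_2}+\dotsb$ and $f$ a symmetric function, $f[g]=f(t^{\mathbf x_1},t^{\mathbf x_2},\dots)$. *)

From HB Require Import structures.
From mathcomp Require Import all_boot all_order all_algebra all_fingroup.
From mathcomp Require Import all_solvable all_field all_character.
From mathcomp Require Import mpoly.

Set Implicit Arguments.
Unset Strict Implicit.
Unset Printing Implicit Defensive.

Import Order.TTheory GRing.Theory Num.Theory.
Local Open Scope ring_scope.

(* The complex numbers are modelled by algC (algebraically closed field of
   characteristic 0, mathcomp's field for character theory). *)

Definition trace_on (W : lmodType algC) (U : W -> Prop) (A : W -> W)
  (c : algC) : Prop :=
  exists (r : nat) (u : 'I_r -> W) (a : 'M[algC]_r),
    [/\ forall i, U (u i),
        forall lam : 'I_r -> algC,
          \sum_(i < r) lam i *: u i = 0 -> forall i, lam i = 0,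
        forall w, U w -> exists lam : 'I_r -> algC, w = \sum_(i < r) lam i *: u i,
        forall j, A (u j) = \sum_(i < r) a i j *: u i
      & c = \tr a].

(* Polynomials on M_n: {mpoly algC[n*n]}, the variable mxvec_index i j
   being the entry Q_ij. *)

Definition mx_vars n (Q : 'M[algC]_n) : 'I_(n * n) -> algC :=
  fun v => mxvec Q 0 v.

Definition Xmat n : 'M[{mpoly algC[n * n]}]_n :=
  vec_mx (\row_(v < n * n) 'X_v).

(* V-valued polynomials on M_n, V = algC^m (column vectors):
   elements of P(M_n) (x) V, given by their m coordinates. *)
Definition VPol (n m : nat) := {ffun 'I_m -> {mpoly algC[n * n]}}.

Definition evalV n m (f : VPol n m) (Q : 'M[algC]_n) : 'cV[algC]_m :=
  \col_(k < m) (f k).@[mx_vars Q].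

(* (g . f)(Q) = f(Q g), computed as a polynomial by substitution *)
Definition act n m (g : 'M[algC]_n) (f : VPol n m) : VPol n m :=
  [ffun k => f k \mPo
     [tuple mxvec (Xmat n *m map_mx (fun c => c%:MP) g) 0 v | v < n * n]].

(* Ind^d V, for a representation rG of S_n (= {perm 'I_n}, seen inside
   GL_n via perm_mx) on V = algC^m (column vectors, rG w acting by
   left multiplication) *)
Definition IndV n m (rG : mx_representation algC [set: 'S_n] m) (d : nat)
  (f : VPol n m) : Prop :=
  (forall k, f k \is d.-homog) /\
  (forall (w : 'S_n) (Q : 'M[algC]_n),
      evalV f (perm_mx w *m Q) = rG w *m evalV f Q).

Definition is_ch_Ind n m (rG : mx_representation algC [set: 'S_n] m)
  (d : nat) (P : {mpoly algC[n]}) : Prop :=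
  forall t : 'I_n -> algC, (forall i, t i != 0) ->
    trace_on (IndV rG d) (act (diag_mx (\row_i t i))) P.@[t].

Definition psum (N k : nat) : {mpoly algC[N]} := \sum_(j < N) 'X_j ^+ k.

Definition frob n (chi : 'CF([set: 'S_n])) (N : nat) : {mpoly algC[N]} :=
  (n`!%:R)^-1 *: \sum_(w : 'S_n)
     chi w *: \prod_(c in porbits w) psum N #|c|.

(* Eventually constant sequence (limit in the formal/discrete topology). *)
Definition ev_lim (u : nat -> algC) (c : algC) : Prop :=
  exists B, forall b, (B <= b)%N -> u b = c.

(* Plethysm f[H], H = sum_{x in N^n} t^x, truncated to the monomials t^x
   with |x| < b: f(t^{x_1},..,t^{x_N}) where x_1,..,x_N enumerate the
   x with mdeg x < b.  The coefficient of t^a in f[H] is the limit as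
   b -> oo of the coefficient of t^a in these truncations. *)
Definition pleth_trunc n (f : forall N, {mpoly algC[N]}) (b : nat)
  : {mpoly algC[n]} :=
  f #|{: 'X_{1..n < b}}| \mPo
    [tuple 'X_[(enum_val k : 'X_{1..n < b}) : 'X_{1..n}]
       | k < #|{: 'X_{1..n < b}}|].

Definition pleth_coeff n (f : forall N, {mpoly algC[N]}) (a : 'X_{1..n})
  (c : algC) : Prop :=
  ev_lim (fun b => (pleth_trunc n f b)@_a) c.

Definition series_coeff n (P : nat -> {mpoly algC[n]}) (a : 'X_{1..n})
  (c : algC) : Prop :=
  ev_lim (fun D => \sum_(d < D) (P d)@_a) c.

(* Ind^d V is the image of the homogeneous V-valued polynomials of degree d
   under the Reynolds projector  R f (Q) = 1/n! sum_w rho(w)^-1 f (w Q).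
   R commutes with the torus action f (Q) |-> f (Q diag(t)), which is diagonal
   on the monomials in the entries Q_ij, so the trace of diag(t) on Ind^d V
   is the trace of R diag(t) in the monomial basis: 1/n! sum_w chi(w) times
   the sum of t^(column sums of X) over the monomials X of degree d that are
   fixed by the permutation w of the rows of Q.  Such an X is a w-invariant
   family of rows x_1, ..., x_n in N^n, i.e. one exponent vector y per cycle
   c of w, contributing t^(|c| y); summing over all d gives
   prod_c p_|c| [H], the plethystic form of the Frobenius characteristic. *)

From Pilot Require Import Defs.
From HB Require Import structures.
From mathcomp Require Import all_boot all_order all_algebra all_fingroup.
From mathcomp Require Import all_solvable all_field all_character.
From mathcomp Require Import mpoly.

Set Implicit Arguments.
Unset Strict Implicit.
Unset Printing Implicit Defensive.
Import Order.TTheory GRing.Theory Num.Theory.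
Local Open Scope ring_scope.

Section PolynomialIdentities.

Variable R : numDomainType.

Lemma poly_eq0_of_horner (q : {poly R}) : (forall z, q.[z] = 0) -> q = 0.
Proof.
move=> q0; apply/eqP; apply: contraT => nz_q.
pose rs := [seq (i%:R : R) | i <- iota 0 (size q)].
have rs_roots : all (root q) rs by apply/allP => z _; apply/rootP/q0.
have rs_uniq : uniq rs.
  by rewrite map_inj_uniq ?iota_uniq // => i j /eqP; rewrite eqr_nat => /eqP.
by have := max_poly_roots nz_q rs_roots rs_uniq; rewrite size_map size_iota ltnn.
Qed.

Lemma leq_mnm_mdeg k (m : 'X_{1..k}) i : (m i <= mdeg m)%N.
Proof. by rewrite mdegE (bigD1 i) //= leq_addr. Qed.

Definition mnm_init k (m : 'X_{1..k.+1}) : 'X_{1..k} :=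
  [multinom m (widen_ord (leqnSn k) i) | i < k].

Definition mcoef_last k (p : {mpoly R[k.+1]}) (j : nat) : {mpoly R[k]} :=
  \sum_(m <- msupp p | m ord_max == j) p@_m *: 'X_[mnm_init m].

Lemma meval_last k (p : {mpoly R[k.+1]}) x :
  p.@[x] = \sum_(j < msize p)
     (mcoef_last p j).@[fun i => x (widen_ord (leqnSn k) i)] * x ord_max ^+ j.
Proof.
rewrite mevalE.
rewrite (eq_bigr (fun j : 'I_(msize p) => \sum_(m <- msupp p | m ord_max == j)
    p@_m * \prod_i x i ^+ m i)); last first.
  move=> j _; rewrite raddf_sum /= mulr_suml; apply: eq_bigr => m /eqP <-.
  rewrite mevalZ mevalX big_ord_recr /= mulrA; congr (_ * _ * _).
  by apply: eq_bigr => i _; rewrite mnmE.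
rewrite (exchange_big_dep xpredT) //= big_seq_cond [RHS]big_seq_cond.
apply: eq_bigr => m /andP[m_supp _].
have lt_m : (m ord_max < msize p)%N.
  exact: leq_ltn_trans (leq_mnm_mdeg _ _) (msize_mdeg_lt m_supp).
by rewrite (big_pred1 (Ordinal lt_m)) // => j /=; rewrite eq_sym -val_eqE.
Qed.

Lemma eq_mnm_init_last k (m m' : 'X_{1..k.+1}) :
  (m' == m) = (m' ord_max == m ord_max) && (mnm_init m' == mnm_init m).
Proof.
apply/eqP/andP => [-> //|[/eqP eq_last /eqP eq_init]]; apply/mnmP => i.
have [lt_ik|le_ki] := ltnP i k; last first.
  have -> : i = ord_max by apply/val_inj/eqP; rewrite /= eqn_leq le_ki -ltnS ltn_ord.
  exact: eq_last.
have -> : i = widen_ord (leqnSn k) (Ordinal lt_ik) by apply: val_inj.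
by have := congr1 (fun u : 'X_{1..k} => u (Ordinal lt_ik)) eq_init; rewrite !mnmE.
Qed.

Lemma mcoeff_mcoef_last k (p : {mpoly R[k.+1]}) m :
  (mcoef_last p (m ord_max))@_(mnm_init m) = p@_m.
Proof.
rewrite [in RHS](mpolyE p) /mcoef_last !raddf_sum /= big_mkcond /=.
apply: eq_bigr => m' _; rewrite !mcoeffZ !mcoeffX eq_mnm_init_last.
by case: (m' ord_max == m ord_max); rewrite ?mulr0.
Qed.

Lemma mpoly_eq0_of_meval k (p : {mpoly R[k]}) : (forall x, p.@[x] = 0) -> p = 0.
Proof.
elim: k p => [|k IHk] p p0.
  have p_const : p = (\sum_(m <- msupp p) p@_m)%:MP.
    rewrite {1}[p]mpolyE rmorph_sum; apply: eq_bigr => m _.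
    by rewrite (_ : m = 0%MM) ?mpolyX0 ?alg_mpolyC //; apply/mnmP => -[].
  by move: (p0 (fun _ => 0)); rewrite p_const mevalC => ->.
apply/mpolyP => m; rewrite mcoeff0 -mcoeff_mcoef_last.
suff -> : mcoef_last p (m ord_max) = 0 by rewrite mcoeff0.
have [lt_m|le_m] := ltnP (m ord_max) (msize p); last first.
  rewrite /mcoef_last big_seq_cond big1 // => m' /andP[m'_supp /eqP eq_m].
  have := leq_ltn_trans (leq_mnm_mdeg m' ord_max) (msize_mdeg_lt m'_supp).
  by rewrite eq_m ltnNge le_m.
apply: IHk => y; pose q := \poly_(j < msize p) (mcoef_last p j).@[y].
suff /(congr1 (fun r : {poly R} => r`_(m ord_max))) : q = 0.
  by rewrite coef_poly lt_m coef0.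
apply: poly_eq0_of_horner => z; rewrite horner_poly.
pose x i := if unlift ord_max i is Some i' then y i' else z.
have x_init : (fun i => x (widen_ord (leqnSn k) i)) =1 y.
  move=> i; rewrite /x (_ : widen_ord _ i = lift ord_max i) ?liftK //.
  by apply/val_inj; rewrite /= /bump leqNgt ltn_ord.
have x_last : x ord_max = z by rewrite /x unlift_none.
transitivity p.@[x]; last exact: p0.
rewrite meval_last; apply: eq_bigr => j _.
by rewrite x_last (meval_eq _ x_init).
Qed.

Lemma mpoly_eq0_of_meval_nz k (p : {mpoly R[k]}) :
  (forall x, (forall i, x i != 0) -> p.@[x] = 0) -> p = 0.
Proof.
move=> p0; suff /eqP : p * \prod_i 'X_i = 0.
  rewrite mulf_eq0 => /orP[/eqP // | /prodf_eq0[i _ /eqP]].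
  by move/(congr1 (mcoeff U_(i))); rewrite mcoeffX eqxx mcoeff0 => /eqP; rewrite oner_eq0.
apply: mpoly_eq0_of_meval => x; rewrite mevalM rmorph_prod /=.
have [/forallP x_nz|/forallPn[i /negPn /eqP xi0]] := boolP [forall i, x i != 0].
  by rewrite p0 // mul0r.
by rewrite (bigD1 i) //= mevalXU xi0 mul0r mulr0.
Qed.

End PolynomialIdentities.

Section MpolyComplements.

Variable R : comNzRingType.

Lemma dhomog_big_prod k I (r : seq I) (F : I -> {mpoly R[k]}) (D : I -> nat) :
  (forall i, F i \is (D i).-homog) ->
  \prod_(i <- r) F i \is (\sum_(i <- r) D i)%N.-homog.
Proof.
move=> homF; elim: r => [|i r IHr]; first by rewrite !big_nil dhomog1.
by rewrite !big_cons; apply: dhomogM.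
Qed.

Lemma comp_mpoly_dhomog k k' (p : {mpoly R[k]}) (lq : k.-tuple {mpoly R[k']}) d :
  p \is d.-homog -> (forall i, tnth lq i \is 1.-homog) -> p \mPo lq \is d.-homog.
Proof.
move=> hom_p hom_lq; rewrite comp_mpolyEX big_seq; apply: rpred_sum => m m_supp.
rewrite comp_mpolyX -(dhomog_mf hom_p m_supp) /= mdegE; apply: rpredZ.
rewrite (eq_bigr (fun i => 1 * m i)%N) => [|i _]; last by rewrite mul1n.
by apply: dhomog_big_prod => i; apply: dhomogMn.
Qed.

Lemma msym_dhomog k (s : 'S_k) (p : {mpoly R[k]}) d :
  p \is d.-homog -> msym s p \is d.-homog.
Proof. by rewrite !homog_piE -msym_pihomog => /eqP->. Qed.

Lemma meval_msym k (s : 'S_k) (p : {mpoly R[k]}) (x : 'I_k -> R) :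
  (msym s p).@[x] = p.@[x \o s].
Proof.
rewrite -[msym s p]comp_mpoly_id msym_mPo comp_mpoly_meval.
by apply: meval_eq => i; rewrite !tnth_mktuple mevalXU.
Qed.

Lemma msize_dhomog k d (p : {mpoly R[k]}) :
  p \is d.-homog -> (msize p <= d.+1)%N.
Proof.
move=> hom_p; rewrite msizeE; apply/bigmax_leqP_seq => mm mm_supp _.
by rewrite (dhomog_mf hom_p mm_supp).
Qed.

Lemma mcoeff_comp_scaleX k (p : {mpoly R[k]}) (c : 'I_k -> R) (lq : k.-tuple {mpoly R[k]})
    X :
  (forall i, tnth lq i = c i *: 'X_i) -> (p \mPo lq)@_X = p@_X * \prod_i c i ^+ X i.
Proof.
move=> lqE; rewrite comp_mpolyEX raddf_sum [in RHS](mpolyE p) raddf_sum mulr_suml /=.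
apply: eq_bigr => m' _; rewrite comp_mpolyX.
rewrite (eq_bigr (fun i => c i ^+ m' i *: 'X_i ^+ m' i)) => [|i _]; last first.
  by rewrite lqE exprZn.
rewrite scaler_prod -mpolyXE_id !mcoeffZ !mcoeffX.
by case: eqP => [->|_]; rewrite ?mulr0 ?mul0r ?mulr1.
Qed.

End MpolyComplements.

(* [m#s] in the multinomials library, where it is only a local notation *)
Definition mperm k (m : 'X_{1..k}) (s : 'S_k) : 'X_{1..k} := [multinom m (s i) | i < k].

Section MatrixVariables.

Variable n : nat.

Definition var_row (v : 'I_(n * n)) : 'I_n :=
  (enum_val (cast_ord (esym (mxvec_cast n n)) v)).1.
Definition var_col (v : 'I_(n * n)) : 'I_n :=
  (enum_val (cast_ord (esym (mxvec_cast n n)) v)).2.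

Lemma var_rowE i j : var_row (mxvec_index i j) = i.
Proof. by rewrite /var_row /mxvec_index cast_ordK enum_rankK. Qed.

Lemma var_colE i j : var_col (mxvec_index i j) = j.
Proof. by rewrite /var_col /mxvec_index cast_ordK enum_rankK. Qed.

Lemma mxvec_index_var v : mxvec_index (var_row v) (var_col v) = v.
Proof. by case/mxvec_indexP: v => i j; rewrite var_rowE var_colE. Qed.

Lemma big_mxvec_index (T : Type) (idx : T) (op : Monoid.com_law idx)
    (F : 'I_(n * n) -> T) :
  \big[op/idx]_v F v = \big[op/idx]_i \big[op/idx]_j F (mxvec_index i j).
Proof.
rewrite (reindex (uncurry (@mxvec_index n n))) /=; last exact: curry_mxvec_bij.
by rewrite pair_bigA; apply: eq_bigr => -[i j].
Qed.

Lemma XmatE i j : Xmat n i j = 'X_(mxvec_index i j).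
Proof. by rewrite /Xmat !mxE. Qed.

Lemma meval_comp_mxvec (M : 'M[{mpoly algC[n * n]}]_n) f x :
  (f \mPo [tuple mxvec M 0 v | v < n * n]).@[x] = f.@[mx_vars (map_mx (meval x) M)].
Proof.
rewrite comp_mpoly_meval; apply: meval_eq => v; rewrite tnth_mktuple.
by case/mxvec_indexP: v => i j; rewrite /mx_vars !mxvecE mxE.
Qed.

Lemma map_meval_Xmat (Q : 'M[algC]_n) : map_mx (meval (mx_vars Q)) (Xmat n) = Q.
Proof. by apply/matrixP => i j; rewrite mxE XmatE mevalXU /mx_vars mxvecE. Qed.

Lemma map_meval_mpolyC x (g : 'M[algC]_n) :
  map_mx (@meval (n * n) _ x) (map_mx (fun c => c%:MP) g) = g.
Proof. by apply/matrixP => i j; rewrite !mxE mevalC. Qed.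

Definition mxvar_perm_fun (w : 'S_n) (v : 'I_(n * n)) : 'I_(n * n) :=
  mxvec_index (w (var_row v)) (var_col v).

Lemma mxvar_perm_fun_inj w : injective (mxvar_perm_fun w).
Proof.
move=> v1 v2 /[dup] /(congr1 var_row) eq_row /(congr1 var_col).
rewrite !var_colE => eq_col; rewrite !var_rowE in eq_row.
by rewrite -(mxvec_index_var v1) -(mxvec_index_var v2) (perm_inj eq_row) eq_col.
Qed.

Definition mxvar_perm w : 'S_(n * n) := perm (@mxvar_perm_fun_inj w).

Lemma mxvar_permE w i j : mxvar_perm w (mxvec_index i j) = mxvec_index (w i) j.
Proof. by rewrite permE /mxvar_perm_fun var_rowE var_colE. Qed.

Lemma mx_vars_perm (w : 'S_n) (Q : 'M[algC]_n) :
  mx_vars Q \o mxvar_perm w =1 mx_vars (perm_mx w *m Q).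
Proof.
move=> v; case/mxvec_indexP: v => i j.
by rewrite /= mxvar_permE /mx_vars !mxvecE -row_permE mxE.
Qed.

End MatrixVariables.

Arguments var_row {n}.
Arguments var_col {n}.

Section VectorPolynomials.

Variables n m : nat.
Implicit Types (f g : VPol n m) (Q : 'M[algC]_n).

Lemma evalVD f g Q : evalV (f + g) Q = evalV f Q + evalV g Q.
Proof. by apply/matrixP => k l; rewrite !mxE ffunE mevalD. Qed.

Lemma evalVZ c f Q : evalV (c *: f) Q = c *: evalV f Q.
Proof. by apply/matrixP => k l; rewrite !mxE ffunE mevalZ. Qed.

Lemma evalV_sum I (r : seq I) (P : pred I) (F : I -> VPol n m) Q :
  evalV (\sum_(i <- r | P i) F i) Q = \sum_(i <- r | P i) evalV (F i) Q.
Proof.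
apply/matrixP => k l; rewrite summxE mxE sum_ffunE raddf_sum.
by apply: eq_bigr => i _; rewrite mxE.
Qed.

Lemma evalV_inj f g : (forall Q, evalV f Q = evalV g Q) -> f = g.
Proof.
move=> eq_fg; apply/ffunP => k; apply/eqP; rewrite -subr_eq0; apply/eqP.
apply: mpoly_eq0_of_meval => x; pose Q := vec_mx (\row_v x v).
have mx_varsQ : mx_vars Q =1 x by move=> v; rewrite /mx_vars vec_mxK mxE.
have := congr1 (fun M : 'cV_m => M k 0) (eq_fg Q).
by rewrite /= !mxE !(meval_eq _ mx_varsQ) mevalB => ->; rewrite subrr.
Qed.

Lemma evalV_act (g : 'M_n) f Q : evalV (Defs.act g f) Q = evalV f (Q *m g).
Proof.
apply/matrixP => k l; rewrite !mxE ffunE meval_comp_mxvec.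
by rewrite map_mxM map_meval_Xmat map_meval_mpolyC.
Qed.

Lemma act_is_linear (g : 'M_n) : linear (@Defs.act n m g).
Proof. by move=> c f1 f2; apply/ffunP => k; rewrite !ffunE comp_mpolyD comp_mpolyZ. Qed.

HB.instance Definition _ (g : 'M_n) :=
  GRing.isLinear.Build algC (VPol n m) (VPol n m) *:%R (Defs.act g) (act_is_linear g).

Definition vhomog d f := forall k, f k \is d.-homog.

Lemma act_vhomog d (g : 'M_n) f : vhomog d f -> vhomog d (Defs.act g f).
Proof.
move=> hom_f k; rewrite ffunE; apply: comp_mpoly_dhomog => // v.
rewrite tnth_mktuple; case/mxvec_indexP: v => i j; rewrite mxvecE mxE.
apply: rpred_sum => l _; rewrite XmatE mxE mulrC mul_mpolyC.
by apply: rpredZ; rewrite dhomogX /= mdeg1.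
Qed.

End VectorPolynomials.

Section Reynolds.

Variables (n m : nat) (rG : mx_representation algC [set: 'S_n] m).
Implicit Types (f : VPol n m) (Q : 'M[algC]_n).

Definition twist (w : 'S_n) f : VPol n m :=
  [ffun k => \sum_l rG (w^-1)%g k l *: msym (mxvar_perm w) (f l)].

Lemma evalV_twist w f Q :
  evalV (twist w f) Q = rG (w^-1)%g *m evalV f (perm_mx w *m Q).
Proof.
apply/matrixP => k z; rewrite !mxE ffunE raddf_sum /=; apply: eq_bigr => l _.
by rewrite mevalZ !mxE meval_msym (meval_eq _ (mx_vars_perm _ _)).
Qed.

Definition reynolds f : VPol n m := (n`!%:R)^-1 *: \sum_(w : 'S_n) twist w f.

Lemma evalV_reynolds f Q :
  evalV (reynolds f) Q =
  (n`!%:R)^-1 *: \sum_(w : 'S_n) rG (w^-1)%g *m evalV f (perm_mx w *m Q).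
Proof.
rewrite evalVZ evalV_sum; congr (_ *: _).
by apply: eq_bigr => w _; rewrite evalV_twist.
Qed.

Lemma reynolds_is_linear : linear reynolds.
Proof.
move=> c f g; apply: evalV_inj => Q; rewrite evalVD evalVZ !evalV_reynolds.
rewrite scalerA mulrC -scalerA -scalerDr; congr (_ *: _).
rewrite scaler_sumr -big_split /=; apply: eq_bigr => w _.
by rewrite evalVD evalVZ mulmxDr scalemxAr.
Qed.

HB.instance Definition _ :=
  GRing.isLinear.Build algC (VPol n m) (VPol n m) *:%R reynolds reynolds_is_linear.

Lemma reynolds_equivariant f w Q :
  evalV (reynolds f) (perm_mx w *m Q) = rG w *m evalV (reynolds f) Q.
Proof.
rewrite !evalV_reynolds -scalemxAr mulmx_sumr; congr (_ *: _).
rewrite (reindex (fun u => (u * w^-1)%g)) /=; last first.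
  by exists (fun u => (u * w)%g) => u _; rewrite ?mulgKV ?mulgK.
apply: eq_bigr => u _; rewrite invMg invgK repr_mxM ?in_setT // -mulmxA.
by congr (_ *m (_ *m evalV f _)); rewrite mulmxA -perm_mxM mulgKV.
Qed.

Lemma reynolds_id f :
  (forall w Q, evalV f (perm_mx w *m Q) = rG w *m evalV f Q) -> reynolds f = f.
Proof.
move=> equiv_f; apply: evalV_inj => Q; rewrite evalV_reynolds.
rewrite (eq_bigr (fun _ => evalV f Q)) => [|w _]; last first.
  by rewrite equiv_f mulmxA -repr_mxM ?in_setT // mulVg repr_mx1 mul1mx.
rewrite sumr_const card_Sn -scaler_nat scalerA mulVf ?scale1r //.
by rewrite pnatr_eq0 -lt0n fact_gt0.
Qed.

Lemma reynolds_idem f : reynolds (reynolds f) = reynolds f.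
Proof. by apply: reynolds_id => w Q; rewrite reynolds_equivariant. Qed.

Lemma reynolds_act (g : 'M_n) f :
  Defs.act g (reynolds f) = reynolds (Defs.act g f).
Proof.
apply: evalV_inj => Q; rewrite evalV_act !evalV_reynolds; congr (_ *: _).
by apply: eq_bigr => w _; rewrite evalV_act mulmxA.
Qed.

Lemma reynolds_vhomog d f : vhomog d f -> vhomog d (reynolds f).
Proof.
move=> hom_f k; rewrite ffunE sum_ffunE; apply/rpredZ/rpred_sum => w _.
rewrite ffunE; apply: rpred_sum => l _.
by apply/rpredZ/msym_dhomog.
Qed.

Lemma IndV_reynolds d f : vhomog d f -> IndV rG d (reynolds f).
Proof.
by move=> hom_f; split; [apply: reynolds_vhomog | apply: reynolds_equivariant].
Qed.

Lemma reynolds_IndV d f : IndV rG d f -> reynolds f = f.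
Proof. by case=> _; apply: reynolds_id. Qed.

Lemma mcoeff_reynolds f k Z :
  (reynolds f k)@_Z = (n`!%:R)^-1 *
     \sum_(w : 'S_n) \sum_l rG (w^-1)%g k l * (f l)@_(mperm Z (mxvar_perm w)).
Proof.
rewrite ffunE sum_ffunE mcoeffZ raddf_sum /=; congr (_ * _).
apply: eq_bigr => w _; rewrite ffunE raddf_sum /=; apply: eq_bigr => l _.
by rewrite mcoeffZ mcoeff_sym.
Qed.

End Reynolds.

Lemma mxtrace_restrict (F : fieldType) N (P T : 'M[F]_N) :
  P *m P = P -> P *m T = T *m P ->
  exists a : 'M_(\rank P), row_base P *m T = a *m row_base P /\ \tr a = \tr (P *m T).
Proof.
move=> PP PT; set B := row_base P.
have BP : (B <= P)%MS by rewrite eq_row_base.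
have PB : (P <= B)%MS by rewrite eq_row_base.
have BT : (B *m T <= B)%MS.
  by apply: submx_trans PB; have [D ->] := submxP BP; rewrite -mulmxA PT mulmxA submxMl.
exists (B *m T *m pinvmx B); split; first by rewrite mulmxKpV.
set C := P *m pinvmx B; have PC : P = C *m B by rewrite mulmxKpV.
have BPB : B *m P = B by have [D ->] := submxP BP; rewrite -mulmxA PP.
have BC : B *m C = 1%:M.
  by apply: (row_free_inj (row_base_free P)); rewrite mul1mx -mulmxA -PC.
have -> : P *m T = C *m (B *m T) by rewrite mulmxA -PC.
by rewrite -{2}(mulmxKpV BT) [RHS]mxtrace_mulC -[X in _ = \tr X]mulmxA BC mulmx1.
Qed.

Section LinearCombinations.

Variables (R : nzRingType) (W : lmodType R).

Definition lcomb r (u : 'I_r -> W) (x : 'rV[R]_r) : W := \sum_i x 0 i *: u i.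

Lemma lcomb_row r r' (u : 'I_r -> W) (M : 'M_(r', r)) j :
  lcomb u (row j M) = \sum_i M j i *: u i.
Proof. by apply: eq_bigr => i _; rewrite mxE. Qed.

Lemma eq_lcomb r (u v : 'I_r -> W) : u =1 v -> lcomb u =1 lcomb v.
Proof. by move=> eq_uv x; apply: eq_bigr => i _; rewrite eq_uv. Qed.

Lemma lcomb_row1 r (u : 'I_r -> W) i : lcomb u (row i 1%:M) = u i.
Proof.
rewrite lcomb_row (bigD1 i) //= mxE eqxx scale1r big1 ?addr0 // => j ne_ji.
by rewrite mxE eq_sym (negbTE ne_ji) scale0r.
Qed.

Lemma lcomb_mulmx r r' (u : 'I_r -> W) (x : 'rV_r') (M : 'M_(r', r)) :
  lcomb u (x *m M) = lcomb (fun j => lcomb u (row j M)) x.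
Proof.
rewrite /lcomb; under eq_bigr => i _ do rewrite [(x *m M) 0 i]mxE scaler_suml.
rewrite exchange_big; apply: eq_bigr => j _; rewrite scaler_sumr.
by apply: eq_bigr => i _; rewrite !mxE scalerA.
Qed.

Lemma linear_lcomb (A : {linear W -> W}) r (u : 'I_r -> W) x :
  A (lcomb u x) = lcomb (A \o u) x.
Proof. by rewrite linear_sum; apply: eq_bigr => i _; rewrite linearZ. Qed.

Lemma lcomb_inj r (u : 'I_r -> W) :
  (forall lam : 'I_r -> R, \sum_i lam i *: u i = 0 -> forall i, lam i = 0) ->
  injective (lcomb u).
Proof.
move=> free_u x y eq_xy; apply/rowP => i; apply/eqP; rewrite -subr_eq0; apply/eqP.
apply: (free_u (fun j => x 0 j - y 0 j)); under eq_bigr do rewrite scalerBl.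
by rewrite sumrB; apply/eqP; rewrite subr_eq0; apply/eqP.
Qed.

Lemma lcomb_span r r' (U : W -> Prop) (u : 'I_r -> W) (u' : 'I_r' -> W) :
  (forall w, U w -> exists lam : 'I_r -> R, w = \sum_i lam i *: u i) ->
  (forall j, U (u' j)) ->
  exists S : 'M_(r', r), forall j, u' j = lcomb u (row j S).
Proof.
move=> span_u Uu'; have [S defS] : exists S : 'I_r' -> 'I_r -> R,
    forall j, u' j = \sum_i S j i *: u i.
  apply: (@fin_all_exists _ (fun=> 'I_r -> R)
    (fun j S => u' j = \sum_i S i *: u i)) => j.
  exact: span_u.
exists (\matrix_(j, i) S j i) => j; rewrite lcomb_row defS.
by apply: eq_bigr => i _; rewrite mxE.
Qed.

End LinearCombinations.

Lemma trace_on_uniq (W : lmodType algC) (U : W -> Prop) (A : {linear W -> W}) c c' :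
  trace_on U A c -> trace_on U A c' -> c = c'.
Proof.
move=> [r [u [a [Uu free_u span_u Au ->]]]] [r' [u' [a' [Uu' free_u' span_u' Au' ->]]]].
have{}Au j : A (u j) = lcomb u (row j a^T).
  by rewrite Au lcomb_row; apply: eq_bigr => i _; rewrite mxE.
have{}Au' j : A (u' j) = lcomb u' (row j a'^T).
  by rewrite Au' lcomb_row; apply: eq_bigr => i _; rewrite mxE.
have [S defS] := lcomb_span span_u Uu'.
have [T defT] := lcomb_span span_u' Uu.
have TS1 : T *m S = 1%:M.
  apply/row_matrixP => i; apply: (lcomb_inj free_u).
  by rewrite row_mul lcomb_mulmx -(eq_lcomb defS) -defT lcomb_row1.
have a'E : a'^T = S *m a^T *m T.
  apply/row_matrixP => j; apply: (lcomb_inj free_u'); rewrite -Au' defS.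
  rewrite linear_lcomb (eq_lcomb Au) -lcomb_mulmx (eq_lcomb defT).
  by rewrite -lcomb_mulmx !row_mul.
by rewrite -[in RHS]mxtrace_tr a'E mxtrace_mulC mulmxA TS1 mul1mx mxtrace_tr.
Qed.

Section TorusAction.

Variable n : nat.
Implicit Types (t : 'I_n -> algC) (X : 'X_{1..n * n}).

Definition torus_weight t X : algC := \prod_v t (var_col v) ^+ X v.

Definition colsum X : 'X_{1..n} := [multinom (\sum_i X (mxvec_index i j))%N | j < n].

Lemma mdeg_colsum X : mdeg (colsum X) = mdeg X.
Proof.
rewrite !mdegE big_mxvec_index exchange_big /=.
by apply: eq_bigr => j _; rewrite mnmE.
Qed.

Lemma meval_colsum t X : 'X_[colsum X].@[t] = torus_weight t X.
Proof.
rewrite mevalX /torus_weight big_mxvec_index exchange_big /=.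
apply: eq_bigr => j _; rewrite mnmE -prodrXr.
by apply: eq_bigr => i _; rewrite var_colE.
Qed.

Lemma mcoeff_act_diag m t (f : VPol n m) k X :
  ((Defs.act (diag_mx (\row_i t i)) f) k)@_X = (f k)@_X * torus_weight t X.
Proof.
rewrite ffunE (mcoeff_comp_scaleX _ (c := t \o var_col)) // => v.
rewrite tnth_mktuple; case/mxvec_indexP: v => i j.
rewrite mxvecE /= var_colE mxE (bigD1 j) //= big1 ?addr0 => [|l /negbTE ne_lj].
  by rewrite XmatE !mxE eqxx mulr1n mulrC mul_mpolyC.
by rewrite XmatE !mxE ne_lj mulr0n mulr0.
Qed.

End TorusAction.

Section HomogeneousCoordinates.

Variables n m d : nat.

Local Notation Ix := ('X_{1..(n * n) < d.+1} * 'I_m)%type.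

Definition ix_val (i : 'I_#|{: Ix}|) : Ix := enum_val i.
Definition ix_rank (p : Ix) : 'I_#|{: Ix}| := enum_rank p.

Lemma ix_valK : cancel ix_val ix_rank. Proof. exact: enum_valK. Qed.
Lemma ix_rankK : cancel ix_rank ix_val. Proof. exact: enum_rankK. Qed.

(* Coordinates of V-valued polynomials, indexed by pairs (monomial of degree
   <= d, component of V); [vpoly] ignores the monomials of degree < d. *)
Definition vcoord (f : VPol n m) : 'rV[algC]_#|{: Ix}| :=
  \row_i (f (ix_val i).2)@_((ix_val i).1 : 'X_{1..n * n}).

Definition vpoly (v : 'rV[algC]_#|{: Ix}|) : VPol n m :=
  [ffun k => \sum_(X : 'X_{1..(n * n) < d.+1} | mdeg X == d)
      v 0 (ix_rank (X, k)) *: 'X_[X]].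

Lemma vcoord_is_linear : linear vcoord.
Proof. by move=> c f g; apply/rowP => i; rewrite !mxE !ffunE mcoeffD mcoeffZ. Qed.

Lemma vpoly_is_linear : linear vpoly.
Proof.
move=> c u v; apply/ffunP => k; rewrite !ffunE scaler_sumr -big_split /=.
by apply: eq_bigr => X _; rewrite !mxE scalerDl scalerA.
Qed.

Lemma vpoly_vhomog v : vhomog d (vpoly v).
Proof.
move=> k; rewrite ffunE; apply: rpred_sum => X /eqP mdegX.
by apply: rpredZ; rewrite dhomogX /= mdegX.
Qed.

Lemma vcoordK f : vhomog d f -> vpoly (vcoord f) = f.
Proof.
move=> hom_f; apply/ffunP => k; rewrite ffunE.
rewrite [RHS](mpolywE (msize_dhomog (hom_f k))).
rewrite [RHS](bigID (fun X : 'X_{1..(n * n) < d.+1} => mdeg X == d)) /=.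
rewrite [X in _ = _ + X]big1 ?addr0 => [|X mdegX]; last first.
  by rewrite (dhomog_nemf_coeff (hom_f k)) ?scale0r.
by apply: eq_bigr => X _; rewrite mxE ix_rankK.
Qed.

Lemma mcoeff_vpoly v k (Z : 'X_{1..n * n}) :
  (vpoly v k)@_Z =
  \sum_(X : 'X_{1..(n * n) < d.+1} | mdeg X == d) v 0 (ix_rank (X, k)) * (val X == Z)%:R.
Proof. by rewrite ffunE raddf_sum; apply: eq_bigr => X _ /=; rewrite mcoeffZ mcoeffX. Qed.

Lemma vpolyK v i :
  vcoord (vpoly v) 0 i = if mdeg (ix_val i).1 == d then v 0 i else 0.
Proof.
rewrite mxE mcoeff_vpoly; case: ifP => mdeg_i.
  rewrite (bigD1 (ix_val i).1) //= eqxx mulr1 big1 ?addr0.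
    by rewrite -surjective_pairing ix_valK.
  by move=> X /andP[_ ne_X]; rewrite -bmeqP (negbTE ne_X) mulr0.
rewrite big1 // => X /eqP mdegX; case: eqP => [eq_X|]; last by rewrite mulr0.
by move: mdeg_i; rewrite -eq_X mdegX eqxx.
Qed.

Lemma mcoeff_vpoly_delta i l (Z : 'X_{1..n * n}) :
  (vpoly (delta_mx 0 i) l)@_Z =
  (((ix_val i).2 == l) && (val (ix_val i).1 == Z) && (mdeg (ix_val i).1 == d))%:R.
Proof.
rewrite mcoeff_vpoly big_mkcond /= (bigD1 (ix_val i).1) //= big1 ?addr0; last first.
  move=> X ne_X; case: ifP => // _; rewrite mxE /=.
  case: eqP => [eq_X|]; last by rewrite mul0r.
  by move: ne_X; rewrite -eq_X ix_rankK /= eqxx.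
rewrite mxE /=; have [<-|ne_l] := eqVneq (ix_val i).2 l.
  rewrite -surjective_pairing ix_valK eqxx /=.
  by case: (mdeg _ == d); case: (_ == Z); rewrite ?mul1r.
rewrite (_ : ix_rank _ == i = false) ?mul0r; first by case: ifP.
by apply: contra_neqF ne_l => /eqP <-; rewrite ix_rankK.
Qed.

End HomogeneousCoordinates.

HB.instance Definition _ n m d :=
  GRing.isLinear.Build algC (VPol n m) _ *:%R (@vcoord n m d) (@vcoord_is_linear n m d).
HB.instance Definition _ n m d :=
  GRing.isLinear.Build algC _ (VPol n m) *:%R (@vpoly n m d) (@vpoly_is_linear n m d).

Arguments vcoord {n m} d f.
Arguments vpoly : clear implicits.

Section TraceOnInd.

Variables (n m : nat) (rG : mx_representation algC [set: 'S_n] m) (d : nat).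

Local Notation vpoly := (vpoly n m d).
Local Notation N := #|{: 'X_{1..(n * n) < d.+1} * 'I_m}|.

Definition reynolds_mx : 'M[algC]_N := lin1_mx (vcoord d \o reynolds rG \o vpoly).

Definition torus_mx (t : 'I_n -> algC) : 'M[algC]_N :=
  diag_mx (\row_i if mdeg (ix_val i).1 == d then torus_weight t (ix_val i).1 else 0).

Lemma mul_reynolds_mx v : v *m reynolds_mx = vcoord d (reynolds rG (vpoly v)).
Proof. exact: mul_rV_lin1. Qed.

Lemma mul_torus_mx t v :
  v *m torus_mx t = vcoord d (Defs.act (diag_mx (\row_i t i)) (vpoly v)).
Proof.
apply/rowP => j; rewrite mul_mx_diag !mxE mcoeff_act_diag.
by have := vpolyK v j; rewrite mxE => ->; case: ifP; rewrite ?mul0r ?mulr0.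
Qed.

Lemma reynolds_mx_idem : reynolds_mx *m reynolds_mx = reynolds_mx.
Proof.
apply/row_matrixP => i; rewrite !rowE mulmxA !mul_reynolds_mx.
by rewrite vcoordK ?reynolds_idem //; apply/reynolds_vhomog/vpoly_vhomog.
Qed.

Lemma reynolds_mx_torus t :
  reynolds_mx *m torus_mx t = torus_mx t *m reynolds_mx.
Proof.
apply/row_matrixP => i; rewrite !rowE !mulmxA mul_reynolds_mx mul_torus_mx.
rewrite mul_reynolds_mx mul_torus_mx !vcoordK ?reynolds_act //.
  by apply/act_vhomog/vpoly_vhomog.
by apply/reynolds_vhomog/vpoly_vhomog.
Qed.

Lemma vpoly_mulmx r (B : 'M_(r, N)) x :
  vpoly (x *m B) = lcomb (fun i => vpoly (row i B)) x.
Proof. by rewrite mulmx_sum_row linear_sum; apply: eq_bigr => i _; rewrite linearZ. Qed.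

Lemma trace_on_Ind t :
  trace_on (IndV rG d) (Defs.act (diag_mx (\row_i t i)))
    (\tr (reynolds_mx *m torus_mx t)).
Proof.
set P := reynolds_mx; set B := row_base P.
have [a [BTa tr_a]] := mxtrace_restrict reynolds_mx_idem (reynolds_mx_torus t).
have BP : (B <= P)%MS by rewrite eq_row_base.
have PB : (P <= B)%MS by rewrite eq_row_base.
have im_P x : (x <= P)%MS -> x = vcoord d (reynolds rG (vpoly x)).
  by move=> /submxP[D ->]; rewrite -mul_reynolds_mx -mulmxA reynolds_mx_idem.
exists (\rank P), (fun i => vpoly (row i B)), a^T; split.
- move=> i; rewrite (im_P _ (submx_trans (row_sub i B) BP)).
  rewrite vcoordK; last exact/reynolds_vhomog/vpoly_vhomog.
  exact: IndV_reynolds (vpoly_vhomog _).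
- move=> lam lam0; pose x := \row_i lam i.
  have xB0 : x *m B = 0.
    rewrite (im_P _ (mulmx_sub x BP)) vpoly_mulmx -[RHS](linear0 (vcoord d)).
    rewrite -(linear0 (reynolds rG)) -lam0; congr (vcoord d (reynolds rG _)).
    by apply: eq_bigr => i _; rewrite mxE.
  have x0 : x = 0 by apply: (row_free_inj (row_base_free P)); rewrite xB0 mul0mx.
  by move=> i; have := congr1 (fun y : 'rV_(\rank P) => y 0 i) x0; rewrite !mxE.
- move=> f IndV_f; exists (fun i => (vcoord d f *m pinvmx B) 0 i).
  have coord_f : (vcoord d f <= B)%MS.
    rewrite -(reynolds_IndV IndV_f) -(vcoordK IndV_f.1) -mul_reynolds_mx.
    exact: submx_trans (submxMl _ _) PB.
  change (f = lcomb (fun i => vpoly (row i B)) (vcoord d f *m pinvmx B)).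
  by rewrite -vpoly_mulmx mulmxKpV // vcoordK //; case: IndV_f.
- move=> j; rewrite -[LHS](@vcoordK n m d); last by apply/act_vhomog/vpoly_vhomog.
  rewrite -mul_torus_mx -row_mul BTa row_mul vpoly_mulmx.
  by apply: eq_bigr => i _; rewrite !mxE.
- by rewrite mxtrace_tr tr_a.
Qed.

End TraceOnInd.

Section CharacterPolynomial.

Variables (n m : nat) (rG : mx_representation algC [set: 'S_n] m).

Definition fixes_mnm (w : 'S_n) (X : 'X_{1..n * n}) := X == mperm X (mxvar_perm w).

Lemma reynolds_mx_diag d i :
  reynolds_mx rG d i i = if mdeg (ix_val i).1 == d then
     (n`!%:R)^-1 * \sum_(w : 'S_n) rG (w^-1)%g (ix_val i).2 (ix_val i).2 *
        (fixes_mnm w (ix_val i).1)%:R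
     else 0.
Proof.
rewrite /reynolds_mx mxE /= mxE mcoeff_reynolds.
case: ifP => mdeg_i; last first.
  rewrite big1 ?mulr0 // => w _; rewrite big1 // => l _.
  by rewrite mcoeff_vpoly_delta mdeg_i andbF mulr0.
congr (_ * _); apply: eq_bigr => w _.
rewrite (bigD1 (ix_val i).2) //= big1 ?addr0 => [|l ne_l]; last first.
  by rewrite mcoeff_vpoly_delta eq_sym (negbTE ne_l) mulr0.
by rewrite mcoeff_vpoly_delta eqxx mdeg_i andbT.
Qed.

Definition ch_Ind_poly d : {mpoly algC[n]} :=
  \sum_(X : 'X_{1..(n * n) < d.+1} | mdeg X == d)
    ((n`!%:R)^-1 * \sum_(w : 'S_n) \tr (rG (w^-1)%g) * (fixes_mnm w X)%:R)
      *: 'X_[colsum X].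

Lemma meval_ch_Ind_poly d t :
  (ch_Ind_poly d).@[t] = \tr (reynolds_mx rG d *m torus_mx m d t).
Proof.
rewrite /mxtrace.
under [RHS]eq_bigr => i _ do rewrite mul_mx_diag mxE reynolds_mx_diag mxE.
rewrite [RHS](reindex (@ix_rank n m d)) /=; last first.
  by exists (@ix_val n m d) => x _; [apply: ix_rankK | apply: ix_valK].
under [RHS]eq_bigr => p _ do rewrite ix_rankK.
rewrite -(pair_bigA _ (fun (X : 'X_{1..(n * n) < d.+1}) (k : 'I_m) =>
  (if mdeg X == d then (n`!%:R)^-1 * \sum_(w : 'S_n) rG (w^-1)%g k k *
     (fixes_mnm w X)%:R else 0) * (if mdeg X == d then torus_weight t X else 0))) /=.
rewrite raddf_sum /= big_mkcond /=; apply: eq_bigr => X _.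
case: ifP => mdegX; last by rewrite big1 // => k _; rewrite mul0r.
rewrite mevalZ meval_colsum -mulr_suml -mulr_sumr exchange_big /=.
by congr (_ * _ * _); apply: eq_bigr => w _; rewrite -mulr_suml.
Qed.

Lemma is_ch_Ind_poly d : is_ch_Ind rG d (ch_Ind_poly d).
Proof. by move=> t _; rewrite meval_ch_Ind_poly; apply: trace_on_Ind. Qed.

Lemma ch_Ind_poly_dhomog d : ch_Ind_poly d \is d.-homog.
Proof.
apply: rpred_sum => X /eqP mdegX; apply: rpredZ.
by rewrite dhomogX /= mdeg_colsum mdegX.
Qed.

Lemma is_ch_Ind_uniq d P : is_ch_Ind rG d P -> P = ch_Ind_poly d.
Proof.
move=> chP; apply/eqP; rewrite -subr_eq0; apply/eqP.
apply: mpoly_eq0_of_meval_nz => t t_nz; rewrite mevalB.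
by rewrite (trace_on_uniq (chP _ t_nz) (is_ch_Ind_poly d t_nz)) subrr.
Qed.

End CharacterPolynomial.

Section CycleIdentity.

Variables (R : comNzRingType) (n : nat) (w : 'S_n).

Definition perm_cycle := {C : {set 'I_n} | C \in porbits w}.

Lemma porbit_porbits i : porbit w i \in porbits w. Proof. exact: imset_f. Qed.

Definition cycle_of (i : 'I_n) : perm_cycle :=
  exist _ (porbit w i) (porbit_porbits i).

Lemma cycle_ofE i C : (cycle_of i == C) = (i \in val C).
Proof.
case: C => C /= C_cycle; rewrite -val_eqE /=.
by have /imsetP[x _ ->] := C_cycle; apply: eq_porbit_mem.
Qed.

Lemma prod_cycle_of (J : Type) (g : perm_cycle -> J) (z : J -> R) :
  \prod_C z (g C) ^+ #|val C| = \prod_i z (g (cycle_of i)).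
Proof.
rewrite [RHS](partition_big cycle_of xpredT) //=; apply: eq_bigr => C _.
rewrite -prodr_const; apply: eq_big => i; first by rewrite cycle_ofE.
by move=> iC; congr (z (g _)); apply/esym/eqP; rewrite cycle_ofE.
Qed.

Lemma porbit_invariant (J : Type) (x : 'I_n -> J) :
  (forall i, x (w i) = x i) -> forall k i, x ((w ^+ k)%g i) = x i.
Proof. by move=> xw k i; rewrite permX; elim: k => [|k IHk] //; rewrite iterS xw. Qed.

(* Expanding the product over the cycles assigns one [y] to each cycle; these
   assignments are the functions on ['I_n] that are constant on the cycles. *)
Lemma prod_porbits_sum_exp (J : finType) (y0 : J) (z : J -> R) :
  \prod_(C in porbits w) \sum_(y : J) z y ^+ #|C| =
  \sum_(x : {ffun 'I_n -> J} | [forall i, x (w i) == x i]) \prod_i z (x i).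
Proof.
rewrite big_sub bigA_distr_bigA /=.
pose h (g : {ffun perm_cycle -> J}) : {ffun 'I_n -> J} :=
  [ffun i => g (cycle_of i)].
pose h' (x : {ffun 'I_n -> J}) : {ffun perm_cycle -> J} :=
  [ffun C : perm_cycle => odflt y0 (omap x [pick k in val C])].
have hK (x : {ffun 'I_n -> J}) : [forall i, x (w i) == x i] -> h (h' x) = x.
  move=> /forallP xw; apply/ffunP => i; rewrite !ffunE.
  case: pickP => [k /= | /(_ i)]; last by rewrite /= porbit_id.
  by case/porbitP => j ->; apply: porbit_invariant => l; apply/eqP.
rewrite [RHS](reindex_onto h h' hK); apply: eq_big => [g|g _]; last first.
  by rewrite prod_cycle_of; apply: eq_bigr => i _; rewrite ffunE.
apply/esym/andP; split.
  apply/forallP => i; rewrite !ffunE (_ : cycle_of (w i) = cycle_of i) //.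
  by apply/val_inj; rewrite /= -[in LHS](expg1 w) porbit_perm.
apply/eqP/ffunP => C; rewrite ffunE; case: pickP => [k /= kC | C0].
  by rewrite ffunE; congr (g _); apply/eqP; rewrite cycle_ofE.
case: C C0 => C /= C_cycle C0; have /imsetP[x _ eq_C] := C_cycle.
by exfalso; have := C0 x; rewrite /= eq_C porbit_id.
Qed.

End CycleIdentity.

Section MonomialRows.

Variable n : nat.
Implicit Types (X : 'X_{1..n * n}) (x : 'I_n -> 'X_{1..n}).

Definition mnm_row X i : 'X_{1..n} := [multinom X (mxvec_index i j) | j < n].

Definition mnm_of_rows x : 'X_{1..n * n} :=
  [multinom x (var_row v) (var_col v) | v < n * n].

Lemma mnm_of_rowsK x i : mnm_row (mnm_of_rows x) i = x i.
Proof. by apply/mnmP => j; rewrite !mnmE var_rowE var_colE. Qed.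

Lemma mdeg_mnm_row X i : (mdeg (mnm_row X i) <= mdeg X)%N.
Proof.
rewrite [leqRHS]mdegE big_mxvec_index (bigD1 i) //= mdegE.
by under eq_bigr do rewrite mnmE; apply: leq_addr.
Qed.

Lemma mdeg_mnm_of_rows x : mdeg (mnm_of_rows x) = mdeg (\sum_i x i)%MM.
Proof.
rewrite mdeg_sum mdegE big_mxvec_index; apply: eq_bigr => i _.
by rewrite mdegE; apply: eq_bigr => j _; rewrite mnmE var_rowE var_colE.
Qed.

Lemma colsum_rows X : colsum X = (\sum_i mnm_row X i)%MM.
Proof.
by apply/mnmP => j; rewrite mnmE mnm_sumE; apply: eq_bigr => i _; rewrite mnmE.
Qed.

Lemma fixes_mnm_rows (w : 'S_n) X :
  fixes_mnm w X = [forall i, mnm_row X (w i) == mnm_row X i].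
Proof.
apply/eqP/forallP => [X_fix i|rows_fix].
  apply/eqP/mnmP => j; rewrite !mnmE [in RHS]X_fix mnmE.
  by rewrite permE /mxvar_perm_fun var_rowE var_colE.
apply/mnmP => v; rewrite mnmE permE /mxvar_perm_fun.
case/mxvec_indexP: v => i j; rewrite var_rowE var_colE.
by have /eqP/mnmP/(_ j) := rows_fix i; rewrite !mnmE.
Qed.

End MonomialRows.

Lemma eq_card_in_bij (T T' : finType) (A : {set T}) (B : {set T'}) f g :
  {in A, forall x, f x \in B} -> {in B, forall y, g y \in A} ->
  {in A, cancel f g} -> {in B, cancel g f} -> #|A| = #|B|.
Proof.
move=> fAB gBA fK gK; apply/eqP.
rewrite eqn_leq -{1}(card_in_imset (can_in_inj fK)) -{2}(card_in_imset (can_in_inj gK)).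
apply/andP; split; apply/subset_leq_card/subsetP => _ /imsetP[x x_in ->].
  exact: fAB.
exact: gBA.
Qed.

(* A [w]-fixed monomial of total degree [mdeg a] in the entries of [Q] with
   column sums [a] is a [w]-invariant family of rows summing to [a]. *)
Lemma card_fixed_mnm n (w : 'S_n) (a : 'X_{1..n}) b :
  (mdeg a < b.+1)%N ->
  #|[set X : 'X_{1..(n * n) < (mdeg a).+1} |
       [&& mdeg X == mdeg a, fixes_mnm w X & colsum X == a]]| =
  #|[set x : {ffun 'I_n -> 'X_{1..n < b.+1}} |
       [forall i, x (w i) == x i] && ((\sum_i val (x i))%MM == a)]|.
Proof.
move=> lt_ab; set d := mdeg a.
pose rows (X : 'X_{1..(n * n) < d.+1}) : {ffun 'I_n -> 'X_{1..n < b.+1}} :=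
  [ffun i => insubd bm0 (mnm_row (val X) i)].
pose glue (x : {ffun 'I_n -> 'X_{1..n < b.+1}}) : 'X_{1..(n * n) < d.+1} :=
  insubd bm0 (mnm_of_rows (fun i => val (x i))).
have rowsE X i : val (rows X i) = mnm_row (val X) i.
  rewrite ffunE val_insubd (leq_ltn_trans (mdeg_mnm_row _ _)) //.
  exact: leq_trans (bmdeg X) lt_ab.
have glueE (x : {ffun 'I_n -> 'X_{1..n < b.+1}}) :
    (\sum_i val (x i))%MM == a -> val (glue x) = mnm_of_rows (fun i => val (x i)).
  by move=> /eqP sum_x; rewrite val_insubd mdeg_mnm_of_rows sum_x ltnSn.
apply: (eq_card_in_bij (f := rows) (g := glue)).
- move=> X; rewrite !inE => /and3P[_ X_fix /eqP <-].
  apply/andP; split.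
    apply/forallP => i; apply/eqP/val_inj; rewrite !rowsE.
    by move: X_fix; rewrite fixes_mnm_rows => /forallP/(_ i)/eqP.
  by rewrite colsum_rows; apply/eqP/eq_bigr => i _; rewrite rowsE.
- move=> x; rewrite !inE => /andP[x_fix sum_x]; rewrite glueE //.
  rewrite mdeg_mnm_of_rows (eqP sum_x) eqxx fixes_mnm_rows colsum_rows /=.
  apply/andP; split; last first.
    by rewrite -(eqP sum_x); apply/eqP/eq_bigr => i _; rewrite mnm_of_rowsK.
  by apply/forallP => i; rewrite !mnm_of_rowsK; move/forallP: x_fix => /(_ i)/eqP ->.
- move=> X _; apply/val_inj; rewrite val_insubd.
  have -> : mnm_of_rows (fun i => val (rows X i)) = val X.
    by apply/mnmP => v; rewrite mnmE rowsE mnmE mxvec_index_var.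
  by rewrite bmdeg.
- move=> x; rewrite inE => /andP[_ sum_x]; apply/ffunP => i; apply/val_inj.
  by rewrite rowsE glueE // mnm_of_rowsK.
Qed.

Lemma sum_nat_indicator (R : nzSemiRingType) (T : finType) (P b : pred T) :
  \sum_(X | P X) ((b X)%:R : R) = #|[set X | P X && b X]|%:R.
Proof.
rewrite -sum1_card natr_sum big_mkcond [RHS]big_mkcond /=.
by apply: eq_bigr => X _; rewrite inE; case: (P X); case: (b X).
Qed.

Lemma psum_pleth n b k :
  psum #|{: 'X_{1..n < b}}| k \mPo
    [tuple 'X_[(enum_val i : 'X_{1..n < b}) : 'X_{1..n}] | i < #|{: 'X_{1..n < b}}|]
  = \sum_(y : 'X_{1..n < b}) ('X_[val y] : {mpoly algC[n]}) ^+ k.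
Proof.
rewrite /psum raddf_sum /=.
under eq_bigr => j _ do rewrite rmorphXn /= comp_mpolyXU -tnth_nth tnth_mktuple.
rewrite -(big_enum_val (A := {: 'X_{1..n < b}})
  (fun y : 'X_{1..n < b} => ('X_[val y] : {mpoly algC[n]}) ^+ k)).
by apply: eq_bigl => y; rewrite inE.
Qed.

Lemma mcoeff_pleth_trunc_frob n (chi : 'CF([set: 'S_n])) b a :
  (pleth_trunc n (frob chi) b.+1)@_a =
  (n`!%:R)^-1 * \sum_(w : 'S_n) chi w *
    #|[set x : {ffun 'I_n -> 'X_{1..n < b.+1}} |
        [forall i, x (w i) == x i] && ((\sum_i val (x i))%MM == a)]|%:R.
Proof.
rewrite /pleth_trunc /frob comp_mpolyZ mcoeffZ.
rewrite (big_morph _ (comp_mpolyD _) (comp_mpoly0 _)) raddf_sum /=; congr (_ * _).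
apply: eq_bigr => w _; rewrite comp_mpolyZ mcoeffZ rmorph_prod /=; congr (_ * _).
under eq_bigr do rewrite psum_pleth.
rewrite (prod_porbits_sum_exp _ bm0 (fun y => 'X_[val y])).
under eq_bigr do rewrite mprodXE.
by rewrite raddf_sum -sum_nat_indicator; apply: eq_bigr => x _ /=; rewrite mcoeffX.
Qed.

Lemma perm_invariantV n (J : eqType) (w : 'S_n) (x : 'I_n -> J) :
  [forall i, x (w i) == x i] = [forall i, x ((w^-1)%g i) == x i].
Proof.
apply/forallP/forallP => x_inv i.
  by have := x_inv ((w^-1)%g i); rewrite permKV eq_sym.
by have := x_inv (w i); rewrite permK eq_sym.
Qed.

Lemma mcoeff_ch_Ind_poly n m (rG : mx_representation algC [set: 'S_n] m) a b :
  (mdeg a < b.+1)%N ->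
  (ch_Ind_poly rG (mdeg a))@_a = (pleth_trunc n (frob (cfRepr rG)) b.+1)@_a.
Proof.
move=> lt_ab; rewrite mcoeff_pleth_trunc_frob raddf_sum /=.
under eq_bigr => X _ do rewrite mcoeffZ mcoeffX -mulrA mulr_suml.
rewrite -mulr_sumr exchange_big /= [in RHS](reindex_inj (@invg_inj _)) /=.
congr (_ * _); apply: eq_bigr => w _; rewrite cfunE in_setT mulr1n.
under eq_bigr => X _ do rewrite -mulrA -natrM mulnb.
rewrite -mulr_sumr sum_nat_indicator (card_fixed_mnm w lt_ab); congr (_ * _%:R).
by apply: eq_card => x; rewrite !inE perm_invariantV.
Qed.

Theorem theorem8 (n m : nat) (rG : mx_representation algC [set: 'S_n] m) :
  (exists P : nat -> {mpoly algC[n]}, forall d, is_ch_Ind rG d (P d)) /\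
  (forall P : nat -> {mpoly algC[n]}, (forall d, is_ch_Ind rG d (P d)) ->
     forall a : 'X_{1..n}, exists c : algC,
       series_coeff P a c /\ pleth_coeff (frob (cfRepr rG)) a c).
Proof.
split; first by exists (ch_Ind_poly rG); apply: is_ch_Ind_poly.
move=> P chP a; exists (ch_Ind_poly rG (mdeg a))@_a; split.
  exists (mdeg a).+1 => D lt_aD.
  rewrite (bigD1 (Ordinal lt_aD)) //= big1 ?addr0 ?(is_ch_Ind_uniq (chP _)) // => j ne_j.
  rewrite (is_ch_Ind_uniq (chP j)) (dhomog_nemf_coeff (ch_Ind_poly_dhomog rG j)) //.
  by apply: contra ne_j => /eqP eq_j; apply/eqP/val_inj; rewrite /= eq_j.
exists (mdeg a).+1 => -[//|b] lt_ab.
by rewrite (mcoeff_ch_Ind_poly rG lt_ab).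
Qed.
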